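(* Let $F$ be a totally real field of degree $g$, $\mathfrak{a}$ a nonzero fractional ideal, $N\ge0$, and $\xi\in\mathbb{T}^{\mathfrak{a}}(\mathbb{C})$ a torsion point. Then there is an isomorphism of mixed $\mathbb{R}$-Hodge structures $$\psi_\xi\colon i_\xi^*\mathbb{L}og^N_{\mathfrak{a}}\xrightarrow{\ \cong\ }\prod_{k=0}^N\operatorname{Sym}^k\mathbb{R}(\mathbb{1}).$$ Moreover, for every $x\in F^\times_+$, letting $\xi'\in\mathbb{T}^{x\mathfrak{a}}(\mathbb{C})$ be the point with $\langle x\rangle(\xi')=\xi$, one has $\psi_{\xi'}\circ\langle x\rangle^*=x\cdot\psi_\xi$, i.e. the map $\langle x\rangle^*\colon i_\xi^*\mathbb{L}og^N_{\mathfrak{a}}\to i_{\xi'}^*\mathbb{L}og^N_{x\mathfrak{a}}$ corresponds to the action of $x$ on $\prod_{k=0}^N\operatorname{Sym}^k\mathbb{R}(\mathbb{1})$. In particular $\psi_\xi$ is equivariant for the isotropy subgroup $\Delta_\xi=\{x\in F^\times_+ : x\mathfrak{a}=\mathfrak{a},\ \langle x\rangle(\xi)=\xi\}$.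
   Context: Notation: $I=\operatorname{Hom}(F,\mathbb{R})$, $\alpha^\tau=\tau(\alpha)$, $F^\times_+$ the totally positive elements, $\mathbb{T}^{\mathfrak{a}}=\operatorname{Spec}\mathbb{Q}[t^\alpha\mid\alpha\in\mathfrak{a}]$. Choose a $\mathbb{Z}$-basis $\boldsymbol{\alpha}=(\alpha_1,\dots,\alpha_g)$ of $\mathfrak{a}$; $u_{\alpha_i}\in H_{\mathfrak{a},\mathbb{C}}=H^1_{\mathrm{dR}}(\mathbb{T}^{\mathfrak{a}}/\mathbb{C})^\vee$ is the dual basis of $d\log t^{\alpha_i}$, $u^{\mathbf{k}}_{\boldsymbol{\alpha}}=\prod u_{\alpha_i}^{k_i}$. The logarithm sheaf $\mathcal{L}og^N_{\mathfrak{a}}=\prod_{|\mathbf{k}|\le N}\mathcal{O}\,u^{\mathbf{k}}_{\boldsymbol{\alpha}}$ has connection $\nabla(f u^{\mathbf{k}})=u^{\mathbf{k}}\otimes df+\sum_i f u^{\mathbf{k}+1_i}\otimes d\log t^{\alpha_i}$ ($u^{\mathbf{k}}=0$ if $|\mathbf{k}|>N$). Its horizontal sections have local basis $\gamma^{\mathbf{k}}_{\boldsymbol{\alpha}}=(2\pi i)^{|\mathbf{k}|}\exp(-\sum_i\log t^{\alpha_i}\,u_{\alpha_i})\,u^{\mathbf{k}}_{\boldsymbol{\alpha}}$ (local branches of $\log$), and $\mathbb{L}og^N_{\mathfrak{a}}$ is the $\mathbb{R}$-local system spanned by the $\gamma^{\mathbf{k}}_{\boldsymbol{\alpha}}$,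 $|\mathbf{k}|\le N$ (independent of choices). It is a variation of mixed $\mathbb{R}$-Hodge structures with weight filtration $W_{-2m}=W_{-2m+1}=\prod_{m\le|\mathbf{k}|\le N}\mathbb{R}\gamma^{\mathbf{k}}_{\boldsymbol{\alpha}}$ and Hodge filtration $F^{-p}\mathcal{L}og^N_{\mathfrak{a}}=\prod_{|\mathbf{k}|\le p}\mathcal{O}u^{\mathbf{k}}_{\boldsymbol{\alpha}}$; its fiber $i_\xi^*\mathbb{L}og^N_{\mathfrak{a}}$ at a point $\xi$ with the induced filtrations is a mixed $\mathbb{R}$-Hodge structure. For $x\in F^\times_+$, $\langle x\rangle\colon\mathbb{T}^{x\mathfrak{a}}\to\mathbb{T}^{\mathfrak{a}}$ is induced by $\mathfrak{a}\to x\mathfrak{a}$, $\alpha\mapsto x\alpha$ (so $\langle x\rangle^*t^\alpha=t^{x\alpha}$), and $\langle x\rangle^*\colon i_\xi^*\mathbb{L}og^N_{\mathfrak{a}}\to i_{\xi'}^*\mathbb{L}og^N_{x\mathfrak{a}}$ is the map induced by the isomorphism $\langle x\rangle^*\mathcal{L}og^N_{\mathfrak{a}}\cong\mathcal{L}og^N_{x\mathfrak{a}}$, $u^{\mathbf{k}}_{\boldsymbol{\alpha}}\mapsto u^{\mathbf{k}}_{x\boldsymbol{\alpha}}$. $\mathbb{R}(\mathbb{1})=\bigoplus_{\tau\in I}\mathbb{R}(1_\tau)$, each $\mathbb{R}(1_\tau)$ a copy of the Tate structure $\mathbb{R}(1)=2\pi i\mathbb{R}$ (pure of weight $-2$, $F^{-1}=$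 everything, $F^0=0$), with basis $e_\tau$ ($=2\pi i$ in the $\tau$-component); $x\in F^\times_+$ acts on $\mathbb{R}(1_\tau)$ by multiplication by $(x^\tau)^{-1}$, and on $\operatorname{Sym}^k\mathbb{R}(\mathbb{1})$ by the induced action. *)

From HB Require Import structures.
From mathcomp Require Import all_boot all_order all_algebra all_field.
From mathcomp Require Import complex.
From mathcomp Require Import boolp classical_sets reals sequences exp trigo.
Set Implicit Arguments.
Unset Strict Implicit.
Unset Printing Implicit Defensive.
Import Order.TTheory GRing.Theory Num.Theory.
Local Open Scope ring_scope.
Local Open Scope complex_scope.
Local Open Scope classical_set_scope.

Section LogDefs.
Variable R : realType.
Local Notation C := R[i].

Definition cexp (z : C) : C := (expR (complex.Re z))%:C * (cos (complex.Im z) +i* sin (complex.Im z)).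

Definition two_pi_i : C := 0 +i* (2 * pi).

(* multi-indices k = (k_1,..,k_g); only those with |k| <= N are ever used *)
Definition mindex (g N : nat) := {ffun 'I_g -> 'I_N.+1}.
Definition mdeg g N (k : mindex g N) : nat := (\sum_i (k i : nat))%N.

Definition spanC (X : Type) (I : finType) (P : pred I) (b : I -> X -> C)
  : set (X -> C) :=
  [set f | exists c : I -> C, f = fun v => \sum_(i | P i) c i * b i v].
Definition spanR (X : Type) (I : finType) (P : pred I) (b : I -> X -> C)
  : set (X -> C) :=
  [set f | exists c : I -> R, f = fun v => \sum_(i | P i) (c i)%:C * b i v].

(* An isomorphism of mixed R-Hodge structures, each presented inside a space of
   functions with values in C by: the complex vector space VC, its real
   structure VR, the weight filtration W n (n : int, real subspaces of VR) and
   the Hodge filtration Fil p (p : int, complex subspaces of VC).  psi is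
   C-linear on VC, bijective VC -> VC', and carries VR, W_n, F^p onto
   VR', W'_n, F'^p. *)
Definition mhs_iso (X Y : Type)
  (VC VR : set (X -> C)) (W Fil : int -> set (X -> C))
  (VC' VR' : set (Y -> C)) (W' Fil' : int -> set (Y -> C))
  (psi : (X -> C) -> (Y -> C)) : Prop :=
  [/\ (forall (a : C) f h, VC f -> VC h ->
         psi (fun v => a * f v + h v) = (fun y => a * psi f y + psi h y)),
      (forall f h, VC f -> VC h -> psi f = psi h -> f = h),
      psi @` VC = VC' /\ psi @` VR = VR',
      (forall n, psi @` W n = W' n)
    & (forall p, psi @` Fil p = Fil' p)].

Section Field.
Variable F : fieldExtType rat.

Definition integral (x : F) : Prop :=
  exists p : {poly int}, p \is monic /\ root (map_poly (fun z : int => z%:~R) p) x.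

Definition frac_ideal (A : pred F) : Prop :=
  [/\ 0 \in A,
      (forall a b, a \in A -> b \in A -> a - b \in A),
      (forall r a, integral r -> a \in A -> r * a \in A),
      (exists d, d != 0 /\ forall a, a \in A -> integral (d * a))
    & exists a, a \in A /\ a != 0].

Definition zbasis (g : nat) (A : pred F) (alpha : 'I_g -> F) : Prop :=
  (forall y, y \in A <-> exists c : 'I_g -> int, y = \sum_i alpha i *~ c i) /\
  (forall c : 'I_g -> int, \sum_i alpha i *~ c i = 0 -> forall i, c i = 0).

Definition scale_ideal (x : F) (A : pred F) : pred F := [pred y | x^-1 * y \in A].

(* a torsion point xi of T^A(C) = Hom(A, C^x) (only values on A matter) *)
Definition torsion_point (A : pred F) (xi : F -> C) : Prop :=
  (forall a b, a \in A -> b \in A -> xi (a + b) = xi a * xi b) /\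
  exists n : nat, (0 < n)%N /\ forall a, a \in A -> xi a ^+ n = 1.

Definition totally_positive (g : nat) (tau : 'I_g -> {rmorphism F -> R}) (x : F) : Prop :=
  forall i, 0 < tau i x.

Section Log.
Variables (g N : nat) (alpha : 'I_g -> F).

(* u_{alpha_i}, the dual basis of dlog t^{alpha_i}, realised as the (Q-linear
   extension to F of the) functional alpha_j |-> delta_ij *)
Definition ucoord (i : 'I_g) (v : F) : C := ratr (coord [tuple alpha j | j < g] i v).

Definition umono (k : mindex g N) (v : F) : C := \prod_i ucoord i v ^+ k i.

(* gamma^k = (2 pi i)^{|k|} exp(- sum_i log t^{alpha_i} u_{alpha_i}) u^k at the point,
   L i being the chosen value of log t^{alpha_i} at xi; the exponential is
   truncated at total degree N *)
Definition gamma (L : 'I_g -> C) (k : mindex g N) (v : F) : C :=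
  two_pi_i ^+ mdeg k *
  (\sum_(j < (N - mdeg k).+1) (- \sum_i L i * ucoord i v) ^+ j / (j`!)%:R) *
  umono k v.

Definition admissible (k : mindex g N) : bool := (mdeg k <= N)%N.

(* the fibre i_xi^* Log^N_a with its filtrations *)
Definition LogC : set (F -> C) := spanC admissible umono.
Definition LogR (L : 'I_g -> C) : set (F -> C) := spanR admissible (gamma L).
(* W_{-2m} = W_{-2m+1} = span_R {gamma^k : m <= |k| <= N} *)
Definition LogW (L : 'I_g -> C) (n : int) : set (F -> C) :=
  spanR (fun k => admissible k && (- n <= (mdeg k).*2%:Z)) (gamma L).
Definition LogF (p : int) : set (F -> C) :=
  spanC (fun k => admissible k && ((mdeg k)%:Z <= - p)) umono.

(* prod_{k=0}^N Sym^k R(1), in coordinates w.r.t. the monomial basis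
   e^m = prod_i e_{tau_i}^{m_i} (|m| <= N) *)
Definition tbasis (m : mindex g N) (m' : mindex g N) : C := (m' == m)%:R.
Definition SymC : set (mindex g N -> C) := spanC admissible tbasis.
Definition SymR : set (mindex g N -> C) := spanR admissible tbasis.
(* Sym^k R(1) is pure of weight -2k and Hodge type (-k,-k) *)
Definition SymW (n : int) : set (mindex g N -> C) :=
  spanR (fun m => admissible m && (- n <= (mdeg m).*2%:Z)) tbasis.
Definition SymF (p : int) : set (mindex g N -> C) :=
  spanC (fun m => admissible m && ((mdeg m)%:Z <= - p)) tbasis.

End Log.

(* <x>^* : u^k_alpha |-> u^k_{x alpha}, i.e. f |-> f(x^-1 .) on functions *)
Definition pullx (x : F) (f : F -> C) : F -> C := fun v => f (x^-1 * v).

(* action of x on prod_k Sym^k R(1): e_{tau} |-> (x^tau)^-1 e_tau *)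
Definition Sym_act (g N : nat) (tau : 'I_g -> {rmorphism F -> R}) (x : F)
  (c : mindex g N -> C) : mindex g N -> C :=
  fun m => (\prod_i ((tau i x)^-1) ^+ m i)%:C * c m.

End Field.
End LogDefs.

(* The fibre of Log^N at xi is the space of polynomial functions of degree at
   most N on F, spanned by the monomials u^k in the coordinates dual to the basis
   alpha.  Since g = [F : Q] and the tau_i are distinct, Dedekind's lemma makes
   the matrix (tau_i(alpha_j)) invertible, so the tau_i are another system of
   linear coordinates and the monomials T^m = prod_i (2 pi i tau_i)^(m_i) form a
   basis; psi_xi takes coordinates in it, sending T^m to e^m.  The coordinates
   2 pi i tau_i and 2 pi i u_j are real linear combinations of each other, so
   monomials of each degree in either system have the same complex and the same
   real span; this gives the Hodge filtration.  As xi is torsion, every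
   log t^(alpha_i) is purely imaginary, so gamma^k is (2 pi i)^|k| u^k plus a real
   combination of the (2 pi i)^|k'| u^k' with |k'| > |k|; this triangularity gives
   the real structure and the weight filtration.  Finally <x>^* substitutes
   x^-1 v for v, which multiplies T^m by prod_i (tau_i x)^(-m_i): the action of x
   on Sym. *)

From HB Require Import structures.
From mathcomp Require Import all_boot all_order all_algebra all_field.
From mathcomp Require Import complex.
From mathcomp Require Import boolp classical_sets reals sequences exp trigo.
From mathcomp Require Import ring zify.
Import Order.TTheory GRing.Theory Num.Theory.
Local Open Scope ring_scope.
Local Open Scope complex_scope.
Local Open Scope classical_set_scope.
Set Implicit Arguments.
Unset Strict Implicit.
Unset Printing Implicit Defensive.

Lemma digits_inj (b n : nat) (a a' : nat -> nat) :
  (forall i, (i < n)%N -> (a i < b)%N) -> (forall i, (i < n)%N -> (a' i < b)%N) ->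
  (\sum_(i < n) a i * b ^ i = \sum_(i < n) a' i * b ^ i)%N ->
  forall i, (i < n)%N -> a i = a' i.
Proof.
elim: n a a' => [|n IH] a a' Ha Ha' + i Hi //; rewrite !big_ord_recl /=.
have shift c : (\sum_(j < n) c (bump 0 j) * b ^ bump 0 j =
                (\sum_(j < n) c j.+1 * b ^ j) * b)%N.
  by rewrite big_distrl; apply: eq_bigr => j _; rewrite expnS mulnCA mulnC.
rewrite !shift !expn0 !muln1 !(addnC (a _)) !(addnC (a' _)) => E.
have [a0 a0'] := (Ha 0%N isT, Ha' 0%N isT).
have b0 : (0 < b)%N by apply: leq_ltn_trans a0.
case: i Hi => [|i] Hi.
  by have := congr1 (modn^~ b) E; rewrite /= !modnMDl !modn_small.
have := congr1 (divn^~ b) E; rewrite /= !divnMDl // !divn_small // !addn0.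
move/(IH (fun j => a j.+1) (fun j => a' j.+1)); apply=> // j Hj.
  exact: Ha.
exact: Ha'.
Qed.

Lemma natr_powers_free (K : numDomainType) (I : finType) (P : pred I)
  (e : I -> nat) (c : I -> K) : injective e ->
  (forall s : nat, \sum_(k | P k) c k * s%:R ^+ e k = 0) -> forall k, P k -> c k = 0.
Proof.
move=> e_inj Hc k Pk; pose p : {poly K} := \sum_(l | P l) c l *: 'X^(e l).
have p0 : p = 0.
  apply: (@roots_geq_poly_eq0 _ p [seq s%:R | s <- iota 0 (size p)]).
  - apply/allP => _ /mapP[s _ ->]; rewrite /root /p horner_sum; apply/eqP.
    by rewrite -[RHS](Hc s); apply: eq_bigr => l _; rewrite hornerZ hornerXn.
  - by rewrite map_inj_uniq ?iota_uniq // => s t /eqP; rewrite eqr_nat => /eqP.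
  - by rewrite size_map size_iota.
have := congr1 (fun q : {poly K} => q`_(e k)) p0.
rewrite /p coef_sumMXn coef0 (bigD1 k) ?Pk ?eqxx //= big1 ?addr0 //.
by move=> l /andP[/andP[_ /eqP/e_inj ->]]; rewrite eqxx.
Qed.

Lemma sum_mul1C (K : comNzRingType) (I : finType) (P : pred I) (A B : I -> I -> K) :
  (forall i j, P i -> P j -> \sum_(l | P l) A i l * B l j = (i == j)%:R) ->
  forall i j, P i -> P j -> \sum_(l | P l) B i l * A l j = (i == j)%:R.
Proof.
move=> AB i j Pi Pj.
pose M (D : I -> I -> K) := \matrix_(p < #|P|, q < #|P|) D (enum_val p) (enum_val q).
have sumP (D D' : I -> I -> K) p q :
    (M D *m M D') p q = \sum_(l | P l) D (enum_val p) l * D' l (enum_val q).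
  rewrite mxE; under eq_bigr do rewrite !mxE.
  by rewrite -(big_enum_val (fun l => D (enum_val p) l * D' l (enum_val q))).
have ABM : M A *m M B = 1%:M.
  apply/matrixP => p q; rewrite sumP AB; try exact: enum_valP.
  by rewrite /scalar_mx mxE (inj_eq enum_val_inj).
have /matrixP/(_ (enum_rank_in Pi i) (enum_rank_in Pj j)) := mulmx1C ABM.
by rewrite sumP /scalar_mx mxE -(inj_eq enum_val_inj) !enum_rankK_in.
Qed.

Lemma rmorph_independent (A : pzSemiRingType) (L : idomainType) (I : finType)
  (sigma : I -> {rmorphism A -> L}) :
  (forall i j, sigma i =1 sigma j -> i = j) ->
  forall (P : pred I) (c : I -> L),
  (forall a, \sum_(i | P i) c i * sigma i a = 0) -> forall i, P i -> c i = 0.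
Proof.
move=> sigma_inj P; have [n] := ubnP #|P|; elim: n P => // n IH P ltPn c Hc i Pi.
have cP0 j : P j -> j != i -> c j = 0.
  move=> Pj ji; have /existsNP[y ne] : ~ sigma j =1 sigma i.
    by move/sigma_inj => ij; rewrite ij eqxx in ji.
  pose d k := c k * (sigma k y - sigma i y).
  suff /eqP : d j = 0 by rewrite mulf_eq0 subr_eq0 => /orP[/eqP // | /eqP/ne].
  apply: (IH [pred k | P k & k != i]); rewrite ?inE ?Pj ?ji //.
    by rewrite (cardD1x Pi) in ltPn.
  move=> a; transitivity (\sum_(k | P k) d k * sigma k a).
    by rewrite [RHS](bigD1 i) //= /d subrr mulr0 mul0r add0r.
  transitivity (\sum_(k | P k) c k * sigma k (y * a) -
                sigma i y * \sum_(k | P k) c k * sigma k a).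
    by rewrite mulr_sumr -sumrB; apply: eq_bigr => k _; rewrite rmorphM /d; ring.
  by rewrite !Hc mulr0 subr0.
have := Hc 1; rewrite (bigD1 i) //= big1 => [|j /andP[Pj ji]]; last by rewrite cP0 // mul0r.
by rewrite rmorph1 mulr1 addr0.
Qed.

Section Spans.
Variables (R : realType) (X : Type) (I : finType).
Local Notation C := R[i].

Definition Rsubspace (S : set (X -> C)) :=
  [/\ S (fun _ => 0), (forall f h, S f -> S h -> S (fun v => f v + h v))
    & (forall (r : R) f, S f -> S (fun v => r%:C * f v))].

Definition Csubspace (S : set (X -> C)) :=
  [/\ S (fun _ => 0), (forall f h, S f -> S h -> S (fun v => f v + h v))
    & (forall (r : C) f, S f -> S (fun v => r * f v))].

Lemma Csubspace_Rsubspace S : Csubspace S -> Rsubspace S.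
Proof. by case=> S0 SD SZ; split=> // r f; apply: SZ. Qed.

Lemma Rsubspace_sum S (J : Type) (r : seq J) (P : pred J) (G : J -> X -> C) :
  Rsubspace S -> (forall j, P j -> S (G j)) ->
  S (fun v => \sum_(j <- r | P j) G j v).
Proof.
case=> S0 SD _ SG; elim: r => [|j r IH].
  by under eq_fun do rewrite big_nil.
under eq_fun do rewrite big_cons.
by case: (boolP (P j)) => Pj //; apply: SD => //; apply: SG.
Qed.

Lemma Rsubspace_sub S f h : Rsubspace S -> S f -> S h -> S (fun v => f v - h v).
Proof.
case=> _ SD SZ Sf Sh; have := SD _ _ Sf (SZ (-1) _ Sh).
by under eq_fun do rewrite rmorphN1 mulN1r.
Qed.

Lemma Rsubspace_mull S (q : X -> C) :
  Rsubspace S -> Rsubspace (fun f => S (fun v => q v * f v)).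
Proof.
case=> S0 SD SZ; split.
- by under eq_fun do rewrite mulr0.
- by move=> f h Sf Sh; under eq_fun do rewrite mulrDr; apply: SD.
- by move=> r f Sf; under eq_fun do rewrite mulrCA; apply: SZ.
Qed.

Lemma Rsubspace_mulr S (q : X -> C) :
  Rsubspace S -> Rsubspace (fun f => S (fun v => f v * q v)).
Proof.
move=> /(Rsubspace_mull q).
by have -> // : (fun f => S (fun v => f v * q v)) = (fun f => S (fun v => q v * f v));
  apply: funext => f; under eq_fun do rewrite mulrC.
Qed.

Variables (P : pred I) (b : I -> X -> C).

Lemma spanR_Rsubspace : Rsubspace (spanR P b).
Proof.
split.
- exists (fun _ => 0); apply: funext => v.
  by rewrite big1 // => k _; rewrite rmorph0 mul0r.
- move=> _ _ [c ->] [d ->]; exists (fun k => c k + d k); apply: funext => v.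
  by rewrite -big_split; apply: eq_bigr => k _; rewrite rmorphD mulrDl.
- move=> r _ [c ->]; exists (fun k => r * c k); apply: funext => v.
  by rewrite mulr_sumr; apply: eq_bigr => k _; rewrite rmorphM mulrA.
Qed.

Lemma spanC_Csubspace : Csubspace (spanC P b).
Proof.
split.
- exists (fun _ => 0); apply: funext => v.
  by rewrite big1 // => k _; rewrite mul0r.
- move=> _ _ [c ->] [d ->]; exists (fun k => c k + d k); apply: funext => v.
  by rewrite -big_split; apply: eq_bigr => k _; rewrite mulrDl.
- move=> r _ [c ->]; exists (fun k => r * c k); apply: funext => v.
  by rewrite mulr_sumr; apply: eq_bigr => k _; rewrite mulrA.
Qed.

Lemma spanR_scale (r : R) f : spanR P b f -> spanR P b (fun v => r%:C * f v).
Proof. by case: spanR_Rsubspace => _ _; apply. Qed.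

Lemma spanC_scale (r : C) f : spanC P b f -> spanC P b (fun v => r * f v).
Proof. by case: spanC_Csubspace => _ _; apply. Qed.

Lemma spanR_min S : Rsubspace S -> (forall k, P k -> S (b k)) -> spanR P b `<=` S.
Proof.
move=> SR Sb _ [c ->]; apply: Rsubspace_sum => // k Pk.
by case: SR => _ _ SZ; apply/SZ/Sb.
Qed.

Lemma spanC_min S : Csubspace S -> (forall k, P k -> S (b k)) -> spanC P b `<=` S.
Proof.
move=> SC Sb _ [c ->]; apply: Rsubspace_sum => [|k Pk].
  exact: Csubspace_Rsubspace.
by case: SC => _ _ SZ; apply/SZ/Sb.
Qed.

Lemma spanR_mem k : P k -> spanR P b (b k).
Proof.
move=> Pk; exists (fun j => (j == k)%:R); apply: funext => v.
rewrite (bigD1 k) //= eqxx rmorph1 mul1r big1 ?addr0 // => j /andP[_ /negbTE ->].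
by rewrite rmorph0 mul0r.
Qed.

Lemma spanC_mem k : P k -> spanC P b (b k).
Proof.
move=> Pk; exists (fun j => (j == k)%:R); apply: funext => v.
rewrite (bigD1 k) //= eqxx mul1r big1 ?addr0 // => j /andP[_ /negbTE ->].
by rewrite mul0r.
Qed.

Lemma spanR_spanC : spanR P b `<=` spanC P b.
Proof. by move=> _ [c ->]; exists (fun k => (c k)%:C). Qed.

End Spans.

Lemma sub_spanR (R : realType) (X : Type) (I : finType)
  (P P' : pred I) (b b' : I -> X -> R[i]) :
  (forall k, P k -> spanR P' b' (b k)) -> spanR P b `<=` spanR P' b'.
Proof. by apply: spanR_min; apply: spanR_Rsubspace. Qed.

Lemma sub_spanC (R : realType) (X : Type) (I : finType)
  (P P' : pred I) (b b' : I -> X -> R[i]) :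
  (forall k, P k -> spanC P' b' (b k)) -> spanC P b `<=` spanC P' b'.
Proof. by apply: spanC_min; apply: spanC_Csubspace. Qed.

Lemma spanC_rescale (R : realType) (X : Type) (I : finType) (P : pred I)
  (b : I -> X -> R[i]) (s : I -> R[i]) : (forall k, P k -> s k != 0) ->
  spanC P (fun k v => s k * b k v) = spanC P b.
Proof.
move=> s0; apply/seteqP; split; apply: sub_spanC => k Pk.
  exact/spanC_scale/spanC_mem.
have -> : b k = fun v => (s k)^-1 * (s k * b k v).
  by apply: funext => v; rewrite mulrA mulVf ?s0 // mul1r.
exact/spanC_scale/(spanC_mem (fun k v => s k * b k v) Pk).
Qed.

Section Independence.
Variables (R : realType) (X : Type) (I : finType) (P : pred I).
Local Notation C := R[i].

Definition free_on (b : I -> X -> C) :=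
  forall c : I -> C, (forall v, \sum_(k | P k) c k * b k v = 0) -> forall k, P k -> c k = 0.

Lemma free_on_eq b c d : free_on b ->
  (forall v, \sum_(k | P k) c k * b k v = \sum_(k | P k) d k * b k v) ->
  forall k, P k -> c k = d k.
Proof.
move=> fb E k Pk; apply/eqP; rewrite -subr_eq0; apply/eqP; move: k Pk.
by apply: fb => v; under eq_bigr do rewrite mulrBl; rewrite sumrB E subrr.
Qed.

Lemma sum_delta (b : I -> X -> C) k v : P k ->
  \sum_(l | P l) (k == l)%:R * b l v = b k v.
Proof.
move=> Pk; rewrite (bigD1 k) //= eqxx mul1r big1 ?addr0 // => l /andP[_ /negbTE].
by rewrite eq_sym => ->; rewrite mul0r.
Qed.

Lemma spanC_coef (a b : I -> X -> C) : (forall k, P k -> spanC P a (b k)) ->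
  exists A : I -> I -> C, forall k, P k -> b k = fun v => \sum_(l | P l) A k l * a l v.
Proof.
move=> ba; suff /choice[A bA] : forall k, exists Ak : I -> C,
    P k -> b k = fun v => \sum_(l | P l) Ak l * a l v by exists A.
by move=> k; case: (boolP (P k)) => [/ba [c ->]|_]; [exists c | exists (fun _ => 0)].
Qed.

Lemma sum_subst (a b : I -> X -> C) (A : I -> I -> C) (c : I -> C) v :
  (forall k, P k -> b k = fun v => \sum_(l | P l) A k l * a l v) ->
  \sum_(k | P k) c k * b k v = \sum_(l | P l) (\sum_(k | P k) c k * A k l) * a l v.
Proof.
move=> bA; under eq_bigr => k Pk do rewrite bA // mulr_sumr.
rewrite exchange_big; apply: eq_bigr => l _; rewrite mulr_suml.
by apply: eq_bigr => k _; rewrite mulrA.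
Qed.

Lemma free_on_spanC (a b : I -> X -> C) : free_on a ->
  (forall k, P k -> spanC P a (b k)) -> (forall k, P k -> spanC P b (a k)) -> free_on b.
Proof.
move=> fa /spanC_coef[A bA] /spanC_coef[B aB].
have BA i j : P i -> P j -> \sum_(l | P l) B i l * A l j = (i == j)%:R.
  move=> Pi; move: j; apply: (free_on_eq (c := fun j => \sum_(l | P l) B i l * A l j) fa) => v.
  by rewrite -(sum_subst _ _ bA) sum_delta // (aB i Pi).
move=> c Hc k Pk.
have cA m : P m -> \sum_(l | P l) c l * A l m = 0.
  move: m; apply: (fa (fun m => \sum_(l | P l) c l * A l m)) => v.
  by rewrite -(sum_subst _ _ bA).
have AB := sum_mul1C BA.
transitivity (\sum_(l | P l) c l * \sum_(m | P m) A l m * B m k).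
  rewrite (bigD1 k) //= AB // eqxx mulr1 big1 ?addr0 // => l /andP[Pl lk].
  by rewrite AB // (negbTE lk) mulr0.
under eq_bigr do rewrite mulr_sumr; rewrite exchange_big big1 // => m Pm.
transitivity ((\sum_(l | P l) c l * A l m) * B m k); last by rewrite cA // mul0r.
by rewrite mulr_suml; apply: eq_bigr => l _; rewrite mulrA.
Qed.

End Independence.

Section Monomials.
Variables (R : realType) (X : Type) (g N : nat).
Local Notation C := R[i].
Implicit Types (k m : mindex g N) (x y : 'I_g -> X -> C).

Definition mono x k : X -> C := fun v => \prod_i x i v ^+ k i.

Definition homog x (d : nat) : set (X -> C) :=
  spanR (fun k : mindex g N => admissible k && (mdeg k == d)) (mono x).

Lemma admissible_predT k : admissible k = admissible k && predT (mdeg k).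
Proof. by rewrite andbT. Qed.

Lemma leq_mdeg k i : (k i <= mdeg k)%N.
Proof. by rewrite /mdeg (bigD1 i) //= leq_addr. Qed.

Definition madd k k' : mindex g N := [ffun i => inord (k i + k' i)].

Lemma madd_val k k' i : (mdeg k + mdeg k' <= N)%N -> madd k k' i = (k i + k' i)%N :> nat.
Proof.
move=> H; rewrite ffunE inordK // ltnS (leq_trans _ H) //.
by rewrite leq_add ?leq_mdeg.
Qed.

Lemma mdeg_madd k k' : (mdeg k + mdeg k' <= N)%N -> mdeg (madd k k') = (mdeg k + mdeg k')%N.
Proof. by move=> H; rewrite /mdeg -big_split; apply: eq_bigr => i _; rewrite madd_val. Qed.

Lemma mono_madd x k k' v : (mdeg k + mdeg k' <= N)%N ->
  mono x (madd k k') v = mono x k v * mono x k' v.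
Proof.
by move=> H; rewrite /mono -big_split; apply: eq_bigr => i _; rewrite madd_val // exprD.
Qed.

Definition mindex0 : mindex g N := [ffun=> ord0].

Lemma mdeg_mindex0 : mdeg mindex0 = 0%N.
Proof. by rewrite /mdeg big1 // => i _; rewrite ffunE. Qed.

Lemma mono_mindex0 x v : mono x mindex0 v = 1.
Proof. by rewrite /mono big1 // => i _; rewrite ffunE expr0. Qed.

Definition mindex1 (j : 'I_g) : mindex g N := [ffun i => inord (i == j)].

Lemma mindex1_val j i : (0 < N)%N -> mindex1 j i = (i == j) :> nat.
Proof. by move=> N0; rewrite ffunE inordK // ltnS; case: (i == j). Qed.

Lemma mdeg_mindex1 j : (0 < N)%N -> mdeg (mindex1 j) = 1%N.
Proof.
move=> N0; rewrite /mdeg (bigD1 j) //= mindex1_val // eqxx big1 // => i /negbTE ij.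
by rewrite mindex1_val // ij.
Qed.

Lemma mono_mindex1 x j v : (0 < N)%N -> mono x (mindex1 j) v = x j v.
Proof.
move=> N0; rewrite /mono (bigD1 j) //= mindex1_val // eqxx expr1 big1 ?mulr1 //.
by move=> i /negbTE ij; rewrite mindex1_val // ij expr0.
Qed.

Lemma homog_mono_mem x k : admissible k -> homog x (mdeg k) (mono x k).
Proof. by move=> ak; apply: spanR_mem; rewrite ak eqxx. Qed.

Lemma homog1 x : homog x 0 (fun _ => 1).
Proof.
have -> : (fun _ => 1) = mono x mindex0 by apply: funext => v; rewrite mono_mindex0.
have := @homog_mono_mem x mindex0; rewrite mdeg_mindex0; apply.
by rewrite /admissible mdeg_mindex0.
Qed.

Lemma homogM x a b f h : (a + b <= N)%N -> homog x a f -> homog x b h ->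
  homog x (a + b) (fun v => f v * h v).
Proof.
move=> ab Hf Hh; move: f Hf; apply: spanR_min.
  exact/Rsubspace_mulr/spanR_Rsubspace.
move=> k /andP[_ /eqP dk]; move: h Hh; apply: spanR_min.
  exact/Rsubspace_mull/spanR_Rsubspace.
move=> k' /andP[_ /eqP dk']; rewrite -dk -dk' in ab *.
rewrite -mdeg_madd //; under eq_fun do rewrite -mono_madd //.
by apply: homog_mono_mem; rewrite /admissible mdeg_madd.
Qed.

Lemma homogX x h e : ((0 < N)%N -> homog x 1 h) -> (e <= N)%N ->
  homog x e (fun v => h v ^+ e).
Proof.
move=> Hh; elim: e => [|e IH] He.
  by under eq_fun do rewrite expr0; apply: homog1.
under eq_fun do rewrite exprS; rewrite -add1n.
apply: homogM; first by rewrite add1n.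
  by apply: Hh; apply: leq_trans He.
by apply: IH; apply: ltnW.
Qed.

Lemma homog_mono x y m : admissible m -> ((0 < N)%N -> forall i, homog x 1 (y i)) ->
  homog x (mdeg m) (mono y m).
Proof.
move=> am Hy; move: am; rewrite /admissible /mdeg /mono.
elim: (index_enum 'I_g) => [|i r IH].
  by rewrite big_nil => _; under eq_fun do rewrite big_nil; apply: homog1.
rewrite big_cons => am.
have -> : (fun v => \prod_(j <- i :: r) y j v ^+ m j) =
          (fun v => y i v ^+ m i * \prod_(j <- r) y j v ^+ m j).
  by apply: funext => v; rewrite big_cons.
apply: homogM => //; last by apply: IH; apply: leq_trans am; apply: leq_addl.
by apply: homogX; [move=> /Hy | apply: leq_trans am; apply: leq_addr].
Qed.

Lemma homog_lin x (r : 'I_g -> R) : (0 < N)%N ->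
  homog x 1 (fun v => \sum_j (r j)%:C * x j v).
Proof.
move=> N0; apply: Rsubspace_sum; first exact: spanR_Rsubspace.
move=> j _; apply: spanR_scale.
have -> : x j = mono x (mindex1 j) by apply: funext => v; rewrite mono_mindex1.
by rewrite -(mdeg_mindex1 j N0); apply: homog_mono_mem; rewrite /admissible mdeg_mindex1.
Qed.

Lemma homog_sub_span x d (P : pred (mindex g N)) :
  (forall k, admissible k -> mdeg k = d -> P k) -> homog x d `<=` spanR P (mono x).
Proof.
by move=> dP; apply: sub_spanR => k /andP[ak /eqP dk]; apply/spanR_mem/dP.
Qed.

Lemma sub_spanR_homog x y (P : pred (mindex g N)) (Q : pred nat) :
  (forall k, P k = admissible k && Q (mdeg k)) ->
  (forall k, admissible k -> homog x (mdeg k) (mono y k)) ->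
  spanR P (mono y) `<=` spanR P (mono x).
Proof.
move=> PQ xy; apply: sub_spanR => k; rewrite PQ => /andP[ak Qk].
apply: (homog_sub_span (d := mdeg k)); last exact: xy.
by move=> k' ak' dk'; rewrite PQ ak' dk'.
Qed.

End Monomials.

Section Embeddings.
Variables (R : realType) (F : fieldExtType rat) (g : nat).
Variables (tau : 'I_g -> {rmorphism F -> R}) (alpha : 'I_g -> F).
Hypothesis gdim : g = \dim {: F}.
Hypothesis tau_inj : forall i j, tau i =1 tau j -> i = j.
Hypothesis alpha_free : free [tuple alpha j | j < g].
Local Notation alphat := [tuple alpha j | j < g].

Lemma alphat_nth (i : 'I_g) : alphat`_i = alpha i.
Proof. by rewrite -tnth_nth tnth_mktuple. Qed.

Lemma alpha_basis : basis_of fullv alphat.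
Proof. by rewrite basisEfree alpha_free subvf size_tuple gdim leqnn. Qed.

Lemma coord_alpha_sum (q : 'I_g -> rat) i : coord alphat i (\sum_j q j *: alpha j) = q i.
Proof.
rewrite -(coord_sum_free q i alpha_free); congr coord.
by apply: eq_bigr => j _; rewrite alphat_nth.
Qed.

Lemma tau_coord i v : tau i v = \sum_j ratr (coord alphat j v) * tau i (alpha j).
Proof.
rewrite {1}(coord_basis alpha_basis (memvf v)) rmorph_sum.
apply: eq_bigr => j _; rewrite alphat_nth -mulr_algl alg_num_field rmorphM.
by rewrite fmorph_rat.
Qed.

Definition embmx : 'M[R]_g := \matrix_(i, j) tau i (alpha j).

Lemma embmx_unit : embmx \in unitmx.
Proof.
rewrite -row_free_unit -kermx_eq0; apply/eqP/row_matrixP => r; rewrite row0.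
set u := row r (kermx embmx); have uK : u *m embmx = 0 by rewrite -row_mul mulmx_ker row0.
apply/rowP => i; rewrite [RHS]mxE; move: i isT.
apply: (rmorph_independent tau_inj (P := predT) (c := fun i => u 0 i)) => v.
rewrite (eq_bigr (fun i => \sum_j ratr (coord alphat j v) * (u 0 i * tau i (alpha j))));
  last by move=> k _; rewrite tau_coord mulr_sumr; apply: eq_bigr => j _; rewrite mulrCA.
rewrite exchange_big big1 // => j _; rewrite -mulr_sumr.
have /rowP/(_ j) := uK; rewrite !mxE => uKj.
suff -> : \sum_(k | predT k) u 0 k * tau k (alpha j) = 0 by rewrite mulr0.
by apply: (etrans _ uKj); apply: eq_bigr => k _; rewrite [embmx k j]mxE.
Qed.

Lemma coord_tau j v : ratr (coord alphat j v) = \sum_i invmx embmx j i * tau i v.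
Proof.
have E : \col_i tau i v = embmx *m \col_j ratr (coord alphat j v).
  by apply/colP => i; rewrite !mxE tau_coord; apply: eq_bigr => k _; rewrite !mxE mulrC.
have /colP/(_ j) := congr1 (mulmx (invmx embmx)) E.
rewrite mulmxA mulVmx ?embmx_unit // mul1mx !mxE => <-.
by apply: eq_bigr => i _; rewrite mxE.
Qed.

End Embeddings.

Lemma two_pi_i_neq0 (R : realType) : two_pi_i R != 0.
Proof.
apply/eqP => -[] /eqP; rewrite mulf_eq0 pnatr_eq0 /=.
by have := pi_gt0 R; rewrite lt0r => /andP[/negbTE ->].
Qed.

Section TwoPiICoordinates.
Variables (R : realType) (F : fieldExtType rat) (g N : nat).
Variables (tau : 'I_g -> {rmorphism F -> R}) (alpha : 'I_g -> F).
Hypothesis gdim : g = \dim {: F}.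
Hypothesis tau_inj : forall i j, tau i =1 tau j -> i = j.
Hypothesis alpha_free : free [tuple alpha j | j < g].
Local Notation C := R[i].

Definition ucoord2pi (i : 'I_g) : F -> C := fun v => two_pi_i R * ucoord R alpha i v.
Definition tau2pi (i : 'I_g) : F -> C := fun v => two_pi_i R * (tau i v)%:C.
Definition Umono : mindex g N -> F -> C := mono ucoord2pi.
Definition Tmono : mindex g N -> F -> C := mono tau2pi.

Lemma tau2pi_lin i : tau2pi i = fun v => \sum_j (embmx tau alpha i j)%:C * ucoord2pi j v.
Proof.
apply: funext => v; rewrite /tau2pi (tau_coord tau gdim alpha_free) rmorph_sum mulr_sumr.
by apply: eq_bigr => j _; rewrite rmorphM fmorph_rat mxE /ucoord2pi /ucoord; ring.
Qed.

Lemma ucoord2pi_lin j :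
  ucoord2pi j = fun v => \sum_i (invmx (embmx tau alpha) j i)%:C * tau2pi i v.
Proof.
apply: funext => v; rewrite /ucoord2pi /ucoord -(fmorph_rat (real_complex R)).
rewrite (coord_tau gdim tau_inj alpha_free) rmorph_sum mulr_sumr.
by apply: eq_bigr => i _; rewrite rmorphM mulrCA.
Qed.

Lemma Umono_umono k v : Umono k v = two_pi_i R ^+ mdeg k * umono R alpha k v.
Proof.
by rewrite /Umono /mono /umono /mdeg -prodrXr -big_split; apply: eq_bigr => i _; rewrite exprMn.
Qed.

Lemma Tmono_homog m : admissible m -> homog N ucoord2pi (mdeg m) (Tmono m).
Proof.
by move=> am; apply: homog_mono => // N0 i; rewrite tau2pi_lin; apply: homog_lin.
Qed.

Lemma Umono_homog k : admissible k -> homog N tau2pi (mdeg k) (Umono k).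
Proof.
by move=> ak; apply: homog_mono => // N0 i; rewrite ucoord2pi_lin; apply: homog_lin.
Qed.

Section DegreeSpans.
Variables (P : pred (mindex g N)) (Q : pred nat).
Hypothesis PQ : forall k, P k = admissible k && Q (mdeg k).

Lemma spanR_Umono_Tmono : spanR P Umono = spanR P Tmono.
Proof.
by apply/seteqP; split; apply: (sub_spanR_homog PQ); [apply: Umono_homog | apply: Tmono_homog].
Qed.

Lemma spanC_umono_Tmono : spanC P (umono R alpha) = spanC P Tmono.
Proof.
have -> : spanC P (umono R alpha) = spanC P Umono.
  rewrite -(@spanC_rescale _ _ _ P (umono R alpha) (fun k => two_pi_i R ^+ mdeg k)).
    by congr spanC; apply: funext => k; apply: funext => v; rewrite Umono_umono.
  by move=> k _; rewrite expf_neq0 // two_pi_i_neq0.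
apply/seteqP; split; apply: sub_spanC => k Pk; apply: spanR_spanC.
  by rewrite -spanR_Umono_Tmono; apply: spanR_mem.
by rewrite spanR_Umono_Tmono; apply: spanR_mem.
Qed.

End DegreeSpans.

Lemma umono_free : free_on (@admissible g N) (umono R alpha).
Proof.
move=> c Hc; pose b := N.+1; pose e (k : mindex g N) := (\sum_(i < g) k i * b ^ i)%N.
have e_inj : injective e.
  pose a (k : mindex g N) n := if insub n is Some j then nat_of_ord (k j) else 0%N.
  have Ea k : e k = (\sum_(i < g) a k i * b ^ i)%N by apply: eq_bigr => j _; rewrite /a valK.
  have Ha k i : (a k i < b)%N by rewrite /a; case: (insub i) => // j; apply: ltn_ord.
  move=> k k' /eqP; rewrite !Ea => /eqP E; apply/ffunP => i; apply/val_inj.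
  have := digits_inj (fun i _ => Ha k i) (fun i _ => Ha k' i) E (ltn_ord i).
  by rewrite /a valK.
(* At the point vs s the monomial u^k takes the value s ^+ e k, where the base-b
   digits of e k are the k_i. *)
pose vs (s : nat) := \sum_(j < g) ((s ^ (b ^ j))%:R : rat) *: alpha j.
have umono_vs s k : umono R alpha k (vs s) = s%:R ^+ e k.
  rewrite /umono /e -prodrXr; apply: eq_bigr => i _.
  by rewrite /ucoord coord_alpha_sum // ratr_nat natrX -exprM mulnC.
apply: (natr_powers_free e_inj) => s; rewrite -[RHS](Hc (vs s)).
by apply: eq_bigr => k _; rewrite umono_vs.
Qed.

Lemma Tmono_free : free_on (@admissible g N) Tmono.
Proof.
apply: (free_on_spanC umono_free) => k ak.
  by rewrite (spanC_umono_Tmono (@admissible_predT g N)); apply: spanC_mem.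
by rewrite -(spanC_umono_Tmono (@admissible_predT g N)); apply: spanC_mem.
Qed.

End TwoPiICoordinates.

Section Gamma.
Variables (R : realType) (F : fieldExtType rat) (g N : nat).
Variables (alpha : 'I_g -> F) (L : 'I_g -> R[i]).
Hypothesis ReL : forall i, complex.Re (L i) = 0.
Local Notation C := R[i].
Local Notation Umono := (@Umono R F g N alpha).

Definition gamma_exponent : F -> C := fun v => - \sum_i L i * ucoord R alpha i v.

Lemma gamma_exponent_homog : (0 < N)%N -> homog N (ucoord2pi R alpha) 1 gamma_exponent.
Proof.
move=> N0; suff -> : gamma_exponent =
    fun v => \sum_j (- complex.Im (L j) / (2 * pi))%:C * ucoord2pi R alpha j v.
  exact: homog_lin.
apply: funext => v; rewrite /gamma_exponent -sumrN; apply: eq_bigr => j _.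
rewrite /ucoord2pi mulrA -mulNr; congr (_ * _).
have pi0 : (2 * pi : R) != 0 by rewrite mulf_neq0 ?pnatr_eq0 // gt_eqF // pi_gt0.
move: (ReL j); case: (L j) => a b /= ->.
by apply/eqP; rewrite eq_complex /= !(mulr0, mul0r, subr0, addr0, oppr0) divfK ?eqxx.
Qed.

Lemma Umono_gamma_exponent_homog k j : admissible k -> (mdeg k + j <= N)%N ->
  homog N (ucoord2pi R alpha) (mdeg k + j) (fun v => Umono k v * gamma_exponent v ^+ j).
Proof.
move=> ak kj; apply: homogM => //; first exact: homog_mono_mem.
by apply: homogX; [exact: gamma_exponent_homog | apply: leq_trans kj; apply: leq_addl].
Qed.

Lemma gammaE k : gamma alpha L k =
  fun v => \sum_(j < (N - mdeg k).+1) ((j`!)%:R^-1 : R)%:C * (Umono k v * gamma_exponent v ^+ j).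
Proof.
apply: funext => v; rewrite /gamma Umono_umono mulr_sumr mulr_suml; apply: eq_bigr => j _.
by rewrite fmorphV rmorph_nat /gamma_exponent; ring.
Qed.

Variables (P : pred (mindex g N)) (Q : pred nat).
Hypothesis PQ : forall k, P k = admissible k && Q (mdeg k).
Hypothesis Qup : forall a b, (a <= b)%N -> Q a -> Q b.

Lemma gamma_in_spanR_Umono k : P k -> spanR P Umono (gamma alpha L k).
Proof.
rewrite PQ => /andP[ak Qk]; rewrite gammaE.
apply: Rsubspace_sum; first exact: spanR_Rsubspace.
move=> j _; apply: spanR_scale; have kj : (mdeg k + j <= N)%N.
  by move: (ltn_ord j) ak; rewrite /admissible; lia.
apply: homog_sub_span (Umono_gamma_exponent_homog ak kj) => k' ak' dk'.
by rewrite PQ ak' dk' (Qup (leq_addr j _) Qk).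
Qed.

Lemma Umono_in_spanR_gamma k : P k -> spanR P (gamma alpha L) (Umono k).
Proof.
have [n] := ubnP (N - mdeg k); elim: n k => // n IH k ltkn.
rewrite PQ => /andP[ak Qk].
have -> : Umono k = fun v => gamma alpha L k v -
    \sum_(j < N - mdeg k) (((j.+1)`!)%:R^-1 : R)%:C * (Umono k v * gamma_exponent v ^+ j.+1).
  apply: funext => v; rewrite gammaE big_ord_recl /= fact0 invr1 rmorph1.
  by rewrite mul1r expr0 mulr1 addrK.
apply: Rsubspace_sub; first exact: spanR_Rsubspace.
  by apply: spanR_mem; rewrite PQ ak.
apply: Rsubspace_sum; first exact: spanR_Rsubspace.
move=> j _; apply: spanR_scale; have kj : (mdeg k + j.+1 <= N)%N.
  by move: (ltn_ord j) ak; rewrite /admissible; lia.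
apply: spanR_min (Umono_gamma_exponent_homog ak kj); first exact: spanR_Rsubspace.
move=> k' /andP[ak' /eqP dk']; apply: IH; last first.
  by rewrite PQ ak' dk' (Qup (leq_addr _ _) Qk).
by move: ltkn ak'; rewrite /admissible dk'; lia.
Qed.

Lemma spanR_gamma : spanR P (gamma alpha L) = spanR P Umono.
Proof.
apply/seteqP; split; apply: sub_spanR.
  exact: gamma_in_spanR_Umono.
exact: Umono_in_spanR_gamma.
Qed.

End Gamma.

Section TauCoordinates.
Variables (R : realType) (F : fieldExtType rat) (g N : nat).
Variables (tau : 'I_g -> {rmorphism F -> R}) (alpha : 'I_g -> F).
Hypothesis gdim : g = \dim {: F}.
Hypothesis tau_inj : forall i j, tau i =1 tau j -> i = j.
Hypothesis alpha_free : free [tuple alpha j | j < g].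
Local Notation C := R[i].
Local Notation Tmono := (@Tmono R F g N tau).

Definition Tcomb (c : mindex g N -> C) : F -> C :=
  fun v => \sum_(m | admissible m) c m * Tmono m v.

Definition Tcoord (f : F -> C) : mindex g N -> C := fun m =>
  if admissible m then
    if pselect (exists c, f = Tcomb c) is left H then proj1_sig (cid H) m else 0
  else 0.

Lemma Tcoord_Tcomb c : Tcoord (Tcomb c) = fun m => if admissible m then c m else 0.
Proof.
apply: funext => m; rewrite /Tcoord; case: ifP => // am.
case: pselect => [H|[]]; last by exists c.
case: (cid H) => c' /= E.
apply: (free_on_eq (c := c') (d := c) (Tmono_free (N := N) gdim tau_inj alpha_free) _ am) => v.
by have /(congr1 (fun f => f v))/esym := E.
Qed.

Lemma Tcoord_sum (P : pred (mindex g N)) c : subpred P (@admissible g N) ->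
  Tcoord (fun v => \sum_(m | P m) c m * Tmono m v) = fun m => if P m then c m else 0.
Proof.
move=> Padm; have -> : (fun v => \sum_(m | P m) c m * Tmono m v) =
                       Tcomb (fun m => if P m then c m else 0).
  apply: funext => v; rewrite /Tcomb big_mkcond [RHS]big_mkcond; apply: eq_bigr => m _.
  by case Pm: (P m); [rewrite Padm | case: (admissible m); rewrite ?mul0r].
rewrite Tcoord_Tcomb; apply: funext => m.
by case Pm: (P m); [rewrite Padm | case: (admissible m)].
Qed.

Lemma sum_tbasis (P : pred (mindex g N)) (c : mindex g N -> C) :
  (fun m' => \sum_(m | P m) c m * @tbasis R g N m m') = fun m' => if P m' then c m' else 0.
Proof.
apply: funext => m'; rewrite /tbasis; case: ifP => Pm'.
  rewrite (bigD1 m') //= eqxx mulr1 big1 ?addr0 // => m /andP[_ /negbTE].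
  by rewrite eq_sym => ->; rewrite mulr0.
rewrite big1 // => m Pm; suff /negbTE-> : m' != m by rewrite mulr0.
by apply: contraFN Pm' => /eqP->.
Qed.

Lemma Tcoord_spanC (P : pred (mindex g N)) : subpred P (@admissible g N) ->
  Tcoord @` spanC P Tmono = spanC P (@tbasis R g N).
Proof.
move=> Padm; apply/seteqP; split => [_ [_ [c ->] <-]|_ [c ->]].
  by exists c; rewrite Tcoord_sum // sum_tbasis.
by exists (fun v => \sum_(m | P m) c m * Tmono m v); [exists c | rewrite Tcoord_sum // sum_tbasis].
Qed.

Lemma Tcoord_spanR (P : pred (mindex g N)) : subpred P (@admissible g N) ->
  Tcoord @` spanR P Tmono = spanR P (@tbasis R g N).
Proof.
move=> Padm; apply/seteqP; split => [_ [_ [c ->] <-]|_ [c ->]].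
  by exists c; rewrite Tcoord_sum // sum_tbasis.
exists (fun v => \sum_(m | P m) (c m)%:C * Tmono m v); first by exists c.
by rewrite Tcoord_sum // sum_tbasis.
Qed.

Lemma Tcoord_mhs_iso :
  mhs_iso (spanC (@admissible g N) Tmono) (spanR (@admissible g N) Tmono)
    (fun n => spanR (fun k => admissible k && (- n <= (mdeg k).*2%:Z)) Tmono)
    (fun p => spanC (fun k => admissible k && ((mdeg k)%:Z <= - p)) Tmono)
    (@SymC R g N) (@SymR R g N) (@SymW R g N) (@SymF R g N) Tcoord.
Proof.
split.
- move=> a _ _ [c ->] [d ->].
  have -> : (fun v => a * (\sum_(m | admissible m) c m * Tmono m v) +
                      \sum_(m | admissible m) d m * Tmono m v) =
            (fun v => \sum_(m | admissible m) (a * c m + d m) * Tmono m v).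
    apply: funext => v; rewrite mulr_sumr -big_split; apply: eq_bigr => m _.
    by rewrite mulrDl mulrA.
  rewrite !Tcoord_sum //; apply: funext => m; case: (admissible m) => //.
  by rewrite mulr0 addr0.
- move=> _ _ [c ->] [d ->]; rewrite !Tcoord_sum // => E.
  apply: funext => v; apply: eq_bigr => m am.
  by have /(congr1 (fun h => h m)) := E; rewrite /= am => ->.
- by split; [apply: Tcoord_spanC | apply: Tcoord_spanR].
- by move=> n; apply: Tcoord_spanR => m /andP[].
- by move=> p; apply: Tcoord_spanC => m /andP[].
Qed.

Lemma Tmono_pullx x m v :
  Tmono m (x^-1 * v) = (\prod_i ((tau i x)^-1) ^+ m i)%:C * Tmono m v.
Proof.
rewrite /Tmono /mono rmorph_prod -big_split; apply: eq_bigr => i _.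
by rewrite /= rmorphXn -exprMn /tau2pi rmorphM fmorphV rmorphM; congr (_ ^+ _); ring.
Qed.

Lemma Tcoord_pullx x f : spanC (@admissible g N) Tmono f ->
  Tcoord (pullx x f) = Sym_act tau x (Tcoord f).
Proof.
move=> [c ->]; rewrite /pullx.
under eq_fun do under eq_bigr do rewrite Tmono_pullx mulrCA mulrA.
rewrite !Tcoord_sum //; apply: funext => m; rewrite /Sym_act.
by case: (admissible m); rewrite ?mulr0.
Qed.

End TauCoordinates.

Section LogFibre.
Variables (R : realType) (F : fieldExtType rat) (g N : nat).
Variables (tau : 'I_g -> {rmorphism F -> R}) (alpha : 'I_g -> F) (L : 'I_g -> R[i]).
Hypothesis gdim : g = \dim {: F}.
Hypothesis tau_inj : forall i j, tau i =1 tau j -> i = j.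
Hypothesis alpha_free : free [tuple alpha j | j < g].
Hypothesis ReL : forall i, complex.Re (L i) = 0.

Lemma LogC_Tmono : LogC N alpha = spanC (@admissible g N) (Tmono tau).
Proof. exact: spanC_umono_Tmono gdim tau_inj alpha_free _ _ (@admissible_predT g N). Qed.

Lemma LogF_Tmono p : LogF N alpha p =
  spanC (fun k : mindex g N => admissible k && ((mdeg k)%:Z <= - p)) (Tmono tau).
Proof. exact: (spanC_umono_Tmono gdim tau_inj alpha_free (Q := fun d => d%:Z <= - p)). Qed.

Lemma LogR_Tmono : LogR N alpha L = spanR (@admissible g N) (Tmono tau).
Proof.
rewrite /LogR (spanR_gamma alpha ReL (@admissible_predT g N)) //.
exact: spanR_Umono_Tmono gdim tau_inj alpha_free _ _ (@admissible_predT g N).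
Qed.

Lemma LogW_Tmono n : LogW N alpha L n =
  spanR (fun k : mindex g N => admissible k && (- n <= (mdeg k).*2%:Z)) (Tmono tau).
Proof.
rewrite /LogW (spanR_gamma alpha ReL (Q := fun d => - n <= (d.*2)%:Z)) //.
  exact: (spanR_Umono_Tmono gdim tau_inj alpha_free (Q := fun d => - n <= (d.*2)%:Z)).
by move=> a b ab /le_trans; apply; rewrite lez_nat leq_double.
Qed.

Lemma Log_mhs_iso :
  mhs_iso (LogC N alpha) (LogR N alpha L) (LogW N alpha L) (LogF N alpha)
          (@SymC R g N) (@SymR R g N) (@SymW R g N) (@SymF R g N) (Tcoord tau).
Proof.
rewrite LogC_Tmono LogR_Tmono (funext LogW_Tmono) (funext LogF_Tmono).
exact (Tcoord_mhs_iso N gdim tau_inj alpha_free).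
Qed.

Lemma Log_pullx x f : LogC N alpha f ->
  Tcoord (N := N) tau (pullx x f) = Sym_act tau x (Tcoord tau f).
Proof. by rewrite LogC_Tmono; apply: (Tcoord_pullx gdim tau_inj alpha_free). Qed.

End LogFibre.

Lemma zbasis_free (F : fieldExtType rat) (g : nat) (A : pred F) (alpha : 'I_g -> F) :
  zbasis A alpha -> free [tuple alpha j | j < g].
Proof.
case=> _ Zind; apply/freeP => q Hq i.
pose D := \prod_j denq (q j).
pose c j := numq (q j) * \prod_(l | l != j) denq (q l).
have cE j : (c j)%:~R = q j * D%:~R :> rat.
  by rewrite /c /D [in RHS](bigD1 j) //= !intrM numqE mulrA.
have D0 : D%:~R != 0 :> rat by rewrite intr_eq0; apply/prodf_neq0 => l _; apply: denq_neq0.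
have Hc : \sum_i alpha i *~ c i = 0.
  have -> : \sum_i alpha i *~ c i = D%:~R *: \sum_i q i *: [tuple alpha j | j < g]`_i.
    rewrite scaler_sumr; apply: eq_bigr => j _.
    by rewrite -tnth_nth tnth_mktuple scalerA -scaler_int cE mulrC.
  by rewrite Hq scaler0.
have /eqP := cE i; rewrite (Zind c Hc i) eq_sym mulf_eq0 (negbTE D0) orbF.
by move/eqP.
Qed.

Lemma norm_cexp (R : realType) (z : R[i]) : `|cexp z| = (expR (complex.Re z))%:C.
Proof.
case: z => a b; rewrite /cexp normc_def /= !mul0r subr0 addr0 !exprMn -mulrDr.
by rewrite cos2Dsin2 mulr1 sqrtr_sqr ger0_norm // expR_ge0.
Qed.

Lemma Re_log_torsion (R : realType) (F : fieldExtType rat) (g : nat) (A : pred F)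
  (alpha : 'I_g -> F) (xi : F -> R[i]) (L : 'I_g -> R[i]) :
  zbasis A alpha -> torsion_point A xi -> (forall i, cexp (L i) = xi (alpha i)) ->
  forall i, complex.Re (L i) = 0.
Proof.
case=> HA _ [_ [n [n0 xin]]] HL i.
have Ai : alpha i \in A.
  apply/HA; exists (fun j => (j == i)%:Z).
  by rewrite (bigD1 i) //= eqxx mulr1z big1 ?addr0 // => j /negbTE ->; rewrite mulr0z.
have /(congr1 (fun z : R[i] => `|z|)) := xin _ Ai; rewrite -HL normrX normr1 norm_cexp.
move/eqP; rewrite pexpr_eq1 // => [/eqP|]; last by rewrite -norm_cexp normr_ge0.
rewrite -(rmorph1 (real_complex R)) => /complexI.
by rewrite -expR0 => /expR_inj.
Qed.

Unset Implicit Arguments.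

Theorem proposition3p7 (R : realType) (F : fieldExtType rat) (g : nat)
  (tau : 'I_g -> {rmorphism F -> R}) :
  (* F totally real of degree g, and tau enumerates I = Hom(F, R) *)
  g = \dim {: F} ->
  (forall i j, tau i =1 tau j -> i = j) ->
  (forall sigma : {rmorphism F -> R}, exists i, sigma =1 tau i) ->
  forall N : nat,
  exists psi : pred F -> (F -> R[i]) -> (F -> R[i]) -> (mindex g N -> R[i]),
    (* psi_xi : i_xi^* Log^N_a  ~=  prod_{k<=N} Sym^k R(1) *)
    (forall (A : pred F) (alpha : 'I_g -> F) (xi : F -> R[i]) (L : 'I_g -> R[i]),
       frac_ideal A -> zbasis A alpha -> torsion_point A xi ->
       (forall i, cexp (L i) = xi (alpha i)) ->
       mhs_iso (LogC N alpha) (LogR N alpha L) (LogW N alpha L) (LogF N alpha)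
               (@SymC R g N) (@SymR R g N) (@SymW R g N) (@SymF R g N) (psi A xi)) /\
    (* psi_{xi'} o <x>^* = x . psi_xi *)
    (forall (A : pred F) (alpha : 'I_g -> F) (xi : F -> R[i]) (x : F) (xi' : F -> R[i]),
       frac_ideal A -> zbasis A alpha -> torsion_point A xi ->
       totally_positive tau x ->
       (forall a, a \in A -> xi' (x * a) = xi a) ->
       forall f, LogC N alpha f ->
       psi (scale_ideal x A) xi' (pullx x f) = Sym_act tau x (psi A xi f)) /\
    (* equivariance for the isotropy group Delta_xi *)
    (forall (A : pred F) (alpha : 'I_g -> F) (xi : F -> R[i]) (x : F),
       frac_ideal A -> zbasis A alpha -> torsion_point A xi ->
       totally_positive tau x ->
       (forall y, (y \in scale_ideal x A) = (y \in A)) ->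
       (forall a, a \in A -> xi (x * a) = xi a) ->
       forall f, LogC N alpha f ->
       psi A xi (pullx x f) = Sym_act tau x (psi A xi f)).
Proof.
move=> gdim tau_inj _ N; exists (fun _ _ => Tcoord (N := N) tau).
split; [|split].
- move=> A alpha xi L _ /[dup] /zbasis_free afree Hz Ht HL.
  exact (Log_mhs_iso N gdim tau_inj afree (Re_log_torsion Hz Ht HL)).
- move=> A alpha xi x xi' _ /zbasis_free afree _ _ _.
  exact (Log_pullx gdim tau_inj afree x).
- move=> A alpha xi x _ /zbasis_free afree _ _ _ _.
  exact (Log_pullx gdim tau_inj afree x).
Qed.
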